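(* Let $m,n\ge 0$, $0\le k\le\min(m,n)$, and let $i,j$ be integers with $0\le i\le m$, $0\le j\le n$, $k\le i+j\le m+n-k$. Then $c_{m,n,k}(i,j)$ equals the coefficient of $x^jy^i$ in the power series expansion of $$\frac{(x+y)^{i+j-k}}{(1-x)^{m-k+1}(1+y)^{n-k+1}}.$$ In particular (case $i+j=k$), the coordinate of $f^i\phi_m\otimes f^{k-i}\phi_n$ in $\phi_{m,n,k}$ is the coefficient of $x^{k-i}y^i$ in $\frac{1}{(1-x)^{m-k+1}(1+y)^{n-k+1}}$.
   Context: Let $e,f,h$ be the standard basis of $\mathfrak{sl}(2,\mathbb{C})$. $V(n)$ is the irreducible representation of highest weight $n$ with fixed highest weight vector $\phi_n$; $\{f^i\phi_n\}_{0\le i\le n}$ is a basis, $f^{n+1}\phi_n=0$. $\mathfrak{sl}(2)$ acts on $V(m)\otimes V(n)$ by $X(v\otimes w)=Xv\otimes w+v\otimes Xw$. For $0\le k\le\min(m,n)$, let $\phi_{m,n,k}=\sum_{l=0}^{k}(-1)^l\binom{m-l}{k-l}\binom{n-k+l}{l} f^l\phi_m\otimes f^{k-l}\phi_n$ (a highest weight vector of weight $m+n-2k$). The coordinates $c_{m,n,k}(i,j)$ are defined by $f^{p-k}\phi_{m,n,k}=\sum_{i+j=p,\,0\le i\le m,\,0\le j\le n} c_{m,n,k}(i,j)\, f^i\phi_m\otimes f^j\phi_n$ for $k\le p\le m+n-k$. *)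

From HB Require Import structures.
From mathcomp Require Import all_boot all_order all_algebra.
Set Implicit Arguments. Unset Strict Implicit. Unset Printing Implicit Defensive.
Import Order.TTheory GRing.Theory Num.Theory.
Local Open Scope ring_scope.

(* ---------- The tensor product V(m) (x) V(n) in coordinates ----------
   A vector of V(m) (x) V(n) is given by its coordinates
   v a b = coordinate on  f^a phi_m (x) f^b phi_n  (only 0<=a<=m, 0<=b<=n matter).
   Coefficients are integers (all coefficients involved are integers;
   they embed in C). *)
Definition tvec := nat -> nat -> int.

(* the vector f^a phi_m (x) f^b phi_n  (zero if a > m or b > n, as f^{m+1}phi_m = 0) *)
Definition tbasis (m n a b : nat) : tvec :=
  fun i j => ((i == a) && (j == b) && (a <= m)%N && (b <= n)%N)%:Z.

(* action of f on V(m) (x) V(n):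
   f (f^a phi_m (x) f^b phi_n) = f^(a+1) phi_m (x) f^b phi_n + f^a phi_m (x) f^(b+1) phi_n,
   with f^(m+1) phi_m = 0 and f^(n+1) phi_n = 0. *)
Definition f_act (m n : nat) (v : tvec) : tvec :=
  fun i j =>
    if (i <= m)%N && (j <= n)%N then
      (if i is i'.+1 then v i' j else 0) + (if j is j'.+1 then v i j' else 0)
    else 0.

Definition phi (m n k : nat) : tvec :=
  fun i j => \sum_(0 <= l < k.+1)
     ((-1) ^+ l * ('C(m - l, k - l))%:Z * ('C(n - k + l, l))%:Z * tbasis m n l (k - l) i j).

Definition coord_c (m n k i j : nat) : int :=
  iter (i + j - k) (f_act m n) (phi m n k) i j.

(* ---------- Formal power series in two variables x, y over int ----------
   s a b = coefficient of x^a y^b. *)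
Definition pser := nat -> nat -> int.
Definition ps_const (c : int) : pser := fun a b => if (a == 0%N) && (b == 0%N) then c else 0.
Definition ps_x : pser := fun a b => ((a == 1%N) && (b == 0%N))%:Z.
Definition ps_y : pser := fun a b => ((a == 0%N) && (b == 1%N))%:Z.
Definition ps_add (s t : pser) : pser := fun a b => s a b + t a b.
Definition ps_opp (s : pser) : pser := fun a b => - s a b.
Definition ps_mul (s t : pser) : pser :=
  fun a b => \sum_(a1 < a.+1) \sum_(b1 < b.+1) s a1 b1 * t (a - a1)%N (b - b1)%N.
Definition ps_pow (s : pser) (e : nat) : pser := iter e (ps_mul s) (ps_const 1).
Definition ps_eq (s t : pser) : Prop := forall a b, s a b = t a b.

Definition numer (k i j : nat) : pser := ps_pow (ps_add ps_x ps_y) (i + j - k).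
Definition denom (m n k : nat) : pser :=
  ps_mul (ps_pow (ps_add (ps_const 1) (ps_opp ps_x)) (m - k + 1))
         (ps_pow (ps_add (ps_const 1) ps_y) (n - k + 1)).

From HB Require Import structures.
From mathcomp Require Import all_boot all_order all_algebra.
From mathcomp Require Import ring zify.
Import GRing.Theory.
Local Open Scope ring_scope.

(* The denominator is invertible, with inverse
     Q = sum_(a,b) C(a + m - k, a) (-1)^b C(b + n - k, b) x^a y^b,
   so the unique quotient is (x + y)^t Q with t = i + j - k.  Multiplying by
   x + y shifts coefficients exactly as f acts on V(m) (x) V(n), and the
   coefficients of Q on the antidiagonal a + b = k are those of phi_{m,n,k}.
   Identities between power series are checked on polynomial truncations. *)

Section LowCoefficients.
Variable R : comNzRingType.

Definition low_eq (M : nat) (p q : {poly R}) := forall a, (a < M)%N -> p`_a = q`_a.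

Lemma low_eqM {M p p' q q'} : low_eq M p p' -> low_eq M q q' -> low_eq M (p * q) (p' * q').
Proof.
move=> hp hq a ha; rewrite !coefM; apply: eq_bigr => a1 _.
have ha1 := ltn_ord a1; rewrite hp ?hq //; lia.
Qed.

(* Truncation below degree M of (1 - s X)^-(A+1). *)
Definition binom_series (M : nat) (s : R) (A : nat) : {poly R} :=
  \poly_(a < M) (s ^+ a * ('C(a + A, a))%:R).

Lemma coef_mul_1subX (p : {poly R}) s a :
  (p * (1 - s%:P * 'X))`_a = p`_a - (if a == 0%N then 0 else p`_(a.-1) * s).
Proof. by rewrite mulrBr mulr1 coefB mulrA coefMX coefMC. Qed.

Lemma binom_seriesS_mul M s A :
  low_eq M (binom_series M s A.+1 * (1 - s%:P * 'X)) (binom_series M s A).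
Proof.
move=> a ha; rewrite coef_mul_1subX !coef_poly ha.
case: a ha => [|a] ha /=; first by rewrite !bin0 subr0.
by rewrite (ltnW ha) !addnS binS -addSn natrD exprS; ring.
Qed.

Lemma binom_series0_mul M s : low_eq M (binom_series M s 0 * (1 - s%:P * 'X)) 1.
Proof.
move=> a ha; rewrite coef_mul_1subX !coef_poly ha coef1.
case: a ha => [|a] ha /=; first by rewrite !binn subr0 expr0 mulr1.
by rewrite (ltnW ha) !addn0 !binn exprS; ring.
Qed.

Lemma binom_series_mul_inv M s A :
  low_eq M (binom_series M s A * (1 - s%:P * 'X) ^+ A.+1) 1.
Proof.
elim: A => [|A IH]; first by rewrite expr1; apply: binom_series0_mul.
move=> a ha; rewrite exprS mulrA.
by rewrite (low_eqM (binom_seriesS_mul M s A) (fun a _ => erefl _)) // IH.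
Qed.

End LowCoefficients.

Arguments low_eq {R}.
Arguments binom_series {R}.
Arguments binom_series_mul_inv {R}.

Notation poly2 := {poly {poly int}}.

Definition coef2 (P : poly2) (a b : nat) : int := (P`_a)`_b.

Definition agree (M : nat) (s : pser) (P : poly2) :=
  forall a b, (a < M)%N -> (b < M)%N -> s a b = coef2 P a b.

Definition low_eq2 (M : nat) (P Q : poly2) := agree M (coef2 P) Q.

Definition trunc2 (M : nat) (s : pser) : poly2 := \poly_(a < M) \poly_(b < M) s a b.

Lemma agree_mul {M s t P Q} : agree M s P -> agree M t Q -> agree M (ps_mul s t) (P * Q).
Proof.
move=> hs ht a b ha hb; rewrite /ps_mul /coef2 coefM coef_sum.
apply: eq_bigr => a1 _; rewrite coefM; apply: eq_bigr => b1 _.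
have ha1 := ltn_ord a1; have hb1 := ltn_ord b1; rewrite hs ?ht //; lia.
Qed.

Lemma agree_add {M s t P Q} : agree M s P -> agree M t Q -> agree M (ps_add s t) (P + Q).
Proof. by move=> hs ht a b ha hb; rewrite /ps_add /coef2 hs // ht // !coefD. Qed.

Lemma agree_opp {M s P} : agree M s P -> agree M (ps_opp s) (- P).
Proof. by move=> hs a b ha hb; rewrite /ps_opp /coef2 hs // !coefN. Qed.

Lemma agree_1 M : agree M (ps_const 1) 1.
Proof.
move=> a b _ _; rewrite /ps_const /coef2 coef1.
by case: (a == 0%N); rewrite ?coef1 ?coef0 //; case: (b == 0%N).
Qed.

Lemma agree_pow {M s P} e : agree M s P -> agree M (ps_pow s e) (P ^+ e).
Proof.
move=> hs; elim: e => [|e IH]; first exact: agree_1.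
by rewrite exprS; apply: agree_mul.
Qed.

Lemma agree_x M : agree M ps_x 'X.
Proof.
move=> a b _ _; rewrite /ps_x /coef2 coefX.
by case: (a == 1%N); rewrite ?coef1 ?coef0 //; case: (b == 0%N).
Qed.

Lemma agree_y M : agree M ps_y ('X%:P).
Proof.
move=> a b _ _; rewrite /ps_y /coef2 coefC.
by case: (a == 0%N); rewrite ?coefX ?coef0 //; case: (b == 1%N).
Qed.

Lemma agree_xy M : agree M (ps_add ps_x ps_y) ('X + 'X%:P).
Proof. exact: agree_add (agree_x M) (agree_y M). Qed.

Lemma agree_trunc2 M s : agree M s (trunc2 M s).
Proof. by move=> a b ha hb; rewrite /coef2 /trunc2 !coef_poly ha coef_poly hb. Qed.

Lemma agree_coef2 M P : agree M (coef2 P) P.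
Proof. by []. Qed.

Lemma low_eq2M {M P P' Q Q'} : low_eq2 M P P' -> low_eq2 M Q Q' -> low_eq2 M (P * Q) (P' * Q').
Proof.
move=> hP hQ a b ha hb.
by rewrite -(agree_mul (agree_coef2 M P) (agree_coef2 M Q)) // (agree_mul hP hQ).
Qed.

Definition inv_denom (m n k : nat) : pser :=
  fun a b => ('C(a + (m - k), a))%:Z * ((-1) ^+ b * ('C(b + (n - k), b))%:Z).

Section InverseDenominator.
Variables m n k : nat.

Definition denom_poly : poly2 :=
  (1 - 'X) ^+ (m - k).+1 * (1 + 'X%:P) ^+ (n - k).+1.

Definition inv_denom_poly (M : nat) : poly2 :=
  map_poly polyC (binom_series M 1 (m - k)) * (binom_series M (-1) (n - k))%:P.

Lemma agree_denom M : agree M (denom m n k) denom_poly.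
Proof.
rewrite /denom /denom_poly !addn1; apply: agree_mul; apply: agree_pow.
  exact: agree_add (agree_1 M) (agree_opp (agree_x M)).
exact: agree_add (agree_1 M) (agree_y M).
Qed.

Lemma agree_inv_denom M : agree M (inv_denom m n k) (inv_denom_poly M).
Proof.
move=> a b ha hb; rewrite /coef2 coefMC coef_map /= coefCM !coef_poly ha hb.
by rewrite /inv_denom expr1n mul1r !natz.
Qed.

(* The two factors separate: each is a univariate [binom_series_mul_inv]. *)
Lemma inv_denom_poly_mul M : low_eq2 M (inv_denom_poly M * denom_poly) 1.
Proof.
have -> : inv_denom_poly M * denom_poly =
    map_poly polyC (binom_series M 1 (m - k) * (1 - 1%:P * 'X) ^+ (m - k).+1) *
    (binom_series M (-1) (n - k) * (1 - (-1)%:P * 'X) ^+ (n - k).+1)%:P.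
  rewrite /inv_denom_poly /denom_poly !rmorphM !rmorphXn rmorphB /= rmorph1.
  rewrite polyC1 mul1r map_polyX polyCN polyC1 mulN1r opprK rmorphD /= polyC1; ring.
rewrite -[X in low_eq2 _ _ X]mulr1; apply: low_eq2M => a b ha hb.
  rewrite /coef2 coef_map /= (binom_series_mul_inv _ _ _ _ ha) !coef1.
  by case: (a == 0%N); rewrite ?coefC ?coef1 ?coef0 //; case: (b == 0%N).
rewrite /coef2 coefC coef1 (fun_if (fun p : {poly int} => p`_b)).
by rewrite (binom_series_mul_inv _ _ _ _ hb) coef0; case: (a == 0%N); rewrite ?coef0 ?coef1.
Qed.

Lemma ps_mul_inv_denomK (t : pser) :
  ps_eq (ps_mul (ps_mul t (inv_denom m n k)) (denom m n k)) t.
Proof.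
move=> a b; pose M := (a + b).+1.
have [ha hb] : (a < M)%N /\ (b < M)%N by split; lia.
have ht := agree_trunc2 M t.
rewrite (agree_mul (agree_mul ht (agree_inv_denom M)) (agree_denom M)) // -mulrA.
by rewrite (low_eq2M (agree_coef2 M _) (inv_denom_poly_mul M)) // mulr1 ht.
Qed.

Lemma ps_mul_denom_eq (s t : pser) :
  ps_eq (ps_mul s (denom m n k)) t -> ps_eq s (ps_mul t (inv_denom m n k)).
Proof.
move=> hst a b; pose M := (a + b).+1.
have [ha hb] : (a < M)%N /\ (b < M)%N by split; lia.
have hs := agree_trunc2 M s.
have hsD : low_eq2 M (trunc2 M s * denom_poly) (trunc2 M t).
  move=> a' b' ha' hb'.
  by rewrite -(agree_mul hs (agree_denom M)) // hst (agree_trunc2 M t).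
rewrite (agree_mul (agree_trunc2 M t) (agree_inv_denom M)) //.
rewrite -(low_eq2M hsD (agree_coef2 M _)) // -mulrA [denom_poly * _]mulrC.
by rewrite (low_eq2M (agree_coef2 M _) (inv_denom_poly_mul M)) // mulr1 hs.
Qed.

End InverseDenominator.

Lemma ps_mul_const1 (s : pser) : ps_eq (ps_mul (ps_const 1) s) s.
Proof.
move=> a b; pose M := (a + b).+1.
have [ha hb] : (a < M)%N /\ (b < M)%N by split; lia.
have hs := agree_trunc2 M s.
by rewrite (agree_mul (agree_1 M) hs) // mul1r hs.
Qed.

Lemma ps_mul_xy_shift (p s : pser) a b :
  ps_mul (ps_mul (ps_add ps_x ps_y) p) s a b =
  (if a is a'.+1 then ps_mul p s a' b else 0) +
  (if b is b'.+1 then ps_mul p s a b' else 0).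
Proof.
pose M := (a + b).+1.
have [ha hb] : (a < M)%N /\ (b < M)%N by split; lia.
have hps := agree_mul (agree_trunc2 M p) (agree_trunc2 M s).
rewrite (agree_mul (agree_mul (agree_xy M) (agree_trunc2 M p)) (agree_trunc2 M s)) //.
clearbody M.
rewrite -mulrA mulrDl /coef2 coefD coefXM coefCM [_ * _`_a]mulrC coefD coefMX.
case: a ha => [|a] ha; case: b hb => [|b] hb /=; rewrite ?coef0 ?add0r ?addr0 //;
  rewrite ?hps //; lia.
Qed.

Lemma phi_coord m n k i j : (k <= m)%N -> (k <= n)%N ->
  phi m n k i j =
  if [&& (i <= m)%N, (j <= n)%N & (i + j == k)%N] then inv_denom m n k j i else 0.
Proof.
move=> km kn; rewrite /phi /tbasis.
case: ifP => [/and3P [im jn /eqP ijk]|hno].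
  have uniq_iota : uniq (index_iota 0 k.+1) by rewrite /index_iota iota_uniq.
  rewrite (bigD1_seq i) ?mem_index_iota //=; last by lia.
  rewrite big1_seq ?addr0; last first.
    by move=> l /andP [/negbTE hl _]; rewrite eq_sym hl mulr0.
  have -> : (j == k - i)%N by apply/eqP; lia.
  rewrite eqxx im (_ : (k - i <= n)%N) /= /inv_denom; last by lia.
  have -> : (j + (m - k) = m - i)%N by lia.
  have -> : (k - i = j)%N by lia.
  have -> : (i + (n - k) = n - k + i)%N by lia.
  by rewrite mulr1; ring.
rewrite big1_seq // => l; rewrite mem_index_iota => hlk.
case E : [&& i == l, j == (k - l)%N, (l <= m)%N & (k - l <= n)%N]; last first.
  by move: E; rewrite !andbA => ->; rewrite mulr0.
move: E hno => /and4P [/eqP -> /eqP -> -> ->].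
by have -> : (l + (k - l) == k)%N by apply/eqP; lia.
Qed.

Lemma iter_f_act_phi m n k t i j : (k <= m)%N -> (k <= n)%N ->
  iter t (f_act m n) (phi m n k) i j =
  if [&& (i <= m)%N, (j <= n)%N & (i + j == k + t)%N]
  then ps_mul (ps_pow (ps_add ps_x ps_y) t) (inv_denom m n k) j i else 0.
Proof.
move=> km kn; elim: t i j => [|t IH] i j.
  by rewrite /= ps_mul_const1 phi_coord // addn0.
rewrite iterS /f_act /= ps_mul_xy_shift.
case: (boolP ((i <= m)%N && (j <= n)%N)) => [/andP [im jn]|]; last first.
  by case: (i <= m)%N => //=; case: (j <= n)%N.
rewrite im jn /=.
case: i im => [|i] im; case: j jn => [|j] jn /=; rewrite ?add0r ?addr0 ?IH.
all: rewrite ?add0n ?addn0 ?addSn ?addnS ?eqSS /=.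
- by [].
- by rewrite (ltnW jn).
- by rewrite (ltnW im).
- by rewrite (ltnW im) (ltnW jn) im jn /=; case: ifP => _; rewrite ?addr0 // addrC.
Qed.

Lemma coord_c_numer m n k i j : (k <= m)%N -> (k <= n)%N ->
  (i <= m)%N -> (j <= n)%N -> (k <= i + j)%N ->
  coord_c m n k i j = ps_mul (numer k i j) (inv_denom m n k) j i.
Proof.
by move=> km kn im jn kij; rewrite /coord_c iter_f_act_phi // im jn subnKC // eqxx.
Qed.

Theorem mainTheorem4 (m n k i j : nat) :
  (k <= minn m n)%N -> (i <= m)%N -> (j <= n)%N ->
  (k <= i + j)%N -> (i + j <= m + n - k)%N ->
  (exists S : pser, ps_eq (ps_mul S (denom m n k)) (numer k i j)) /\
  (forall S : pser, ps_eq (ps_mul S (denom m n k)) (numer k i j) ->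
     S j i = coord_c m n k i j).
Proof.
rewrite leq_min => /andP [km kn] im jn kij _; split.
  by exists (ps_mul (numer k i j) (inv_denom m n k)); apply: ps_mul_inv_denomK.
by move=> S /ps_mul_denom_eq ->; rewrite coord_c_numer.
Qed.
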